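(* Consider the following repeated procedure with threshold $\omega>0$. Start from some $\lambda_1 \in \mathbb{R}^m_+$. At each round $t=1,2,\dots$: (1) let $\pi_t \in \Pi$ be a deterministic policy that is a best response, i.e. $\pi_t \in \arg\max_{\pi \in \mathrm{Conv}(\Pi)} L(\pi,\lambda_t)$; (2) let $\hat\pi_t$ be the mixed policy putting weight $1/t$ on each of $\pi_1,\dots,\pi_t$ and $\hat\lambda_t = \frac1t\sum_{t'=1}^t \lambda_{t'}$; (3) compute exactly $L_{\max} = \max_{\pi} L(\pi, \hat\lambda_t)$ (the value at a best response to $\hat\lambda_t$) and $L_{\min} = \min_{\lambda \in \mathbb{R}^m_+} L(\hat\pi_t, \lambda)$; (4) if $L_{\max} - L_{\min} < \omega$, return $\hat\pi_t$; (5) otherwise let $\lambda_{t+1}$ be produced by an online algorithm from $\pi_1,\dots,\pi_t$, where this online algorithm is no-regret with respect to the losses $-L(\pi_t,\cdot)$: for every $T$, $\sum_{t=1}^T (-L)(\pi_t,\lambda_t) \ge \max_{\lambda \in \mathbb{R}^m_+} \sum_{t=1}^T (-L)(\pi_t,\lambda) - R(T)$ with $R(T) = o(T)$. Then this procedure is guaranteed to converge, i.e. it terminates after finitely many rounds; its convergence rate is governed by the regret $R(T)$ of the online algorithm (the duality gap $L_{\max}-L_{\min}$ at round $T$ is at most $R(T)/T$).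
   Context: Setting: finite $\mathcal{S},\mathcal{A}$, $\gamma\in[0,1)$, initial distribution $\mu$, an $(s,a)$-rectangular uncertainty set $\mathcal{P} = \otimes_{(s,a)}\mathcal{P}_{s,a}$ with $\mathcal{P}_{s,a} = \{P \in \Delta(\mathcal{S}): D(P,P^o_{s,a}) \le \beta_{s,a}\}$ around a nominal kernel $P^o$ (minima over these sets taken to be attained), reward $r:\mathcal{S}\times\mathcal{A}\to[0,\bar R]$, constraint rewards $g_i:\mathcal{S}\times\mathcal{A}\to[0,\tau_i]$ ($i=1,\dots,m$) with thresholds $\tau$. $\Pi$ is the class of deterministic stationary policies. For a reward $u$ and $\pi\in\Pi$, $V^\pi_u(s) = \min_{\mathcal{K}\in\otimes_{t\ge0}\mathcal{P}}\mathbb{E}_{\mathcal{K}}[\sum_{t\ge0}\gamma^t u(s_t,a_t)\mid s_0=s,\pi]$ (worst case over sequences of kernels from $\mathcal{P}$, one per time step), $V^\pi_u(\mu)=\langle V^\pi_u,\mu\rangle$, $V^\pi_g = (V^\pi_{g_1},\dots,V^\pi_{g_m})^\top$. $\mathrm{Conv}(\Pi)$ is the set of mixed policies (categorical distributions over finitely many deterministic policies, one sampled per episode), with robust value the corresponding weighted average of robust values. The Lagrangian is $L(\pi,\lambda) = V^\pi_r(\mu) - \lambda^\top(V^\pi_g(\mu)-\tau)$ for $\pi\in\mathrm{Conv}(\Pi)$, $\lambda\in\mathbb{R}^m_+$; it is linear in the mixture weights and in $\lambda$. *)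

From HB Require Import structures.
From mathcomp Require Import all_boot all_order all_algebra.
From mathcomp Require Import all_classical all_reals all_analysis.
Set Implicit Arguments. Unset Strict Implicit. Unset Printing Implicit Defensive.
Import Order.TTheory GRing.Theory Num.Theory numFieldNormedType.Exports.
Local Open Scope ring_scope.
Local Open Scope classical_set_scope.

Section RCMDP.
Variables (R : realType) (S A : finType) (m : nat).

Definition is_dist (p : {ffun S -> R}) : Prop :=
  (forall s, 0 <= p s) /\ \sum_s p s = 1.

Definition policy := {ffun S -> A}.

Record rcmdp := RCMDP {
  div : {ffun S -> R} -> {ffun S -> R} -> R;
  Pnom : S -> A -> {ffun S -> R};
  beta : S -> A -> R;
  gamma : R;
  mu : {ffun S -> R};
  rew : S -> A -> R;
  crew : 'I_m -> S -> A -> R;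
  tau : 'I_m -> R
}.

Variable M : rcmdp.

Definition unc_set (s : S) (a : A) (P : {ffun S -> R}) : Prop :=
  is_dist P /\ div M P (Pnom M s a) <= beta M s a.

Definition kernel_seq := nat -> S -> A -> {ffun S -> R}.
Definition admissible (K : kernel_seq) : Prop :=
  forall t s a, unc_set s a (K t s a).

Fixpoint state_dist (K : kernel_seq) (pi : policy) (s0 : S) (t : nat)
  : {ffun S -> R} :=
  match t with
  | 0 => [ffun s => (s == s0)%:R]
  | t'.+1 => [ffun s' => \sum_s state_dist K pi s0 t' s * K t' s (pi s) s']
  end.

Definition disc_return (K : kernel_seq) (pi : policy) (u : S -> A -> R)
  (s0 : S) : R :=
  limn (series (fun t => gamma M ^+ t *
                  \sum_s state_dist K pi s0 t s * u s (pi s))).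

Definition robust_value (pi : policy) (u : S -> A -> R) (s0 : S) : R :=
  inf [set v | exists K, admissible K /\ v = disc_return K pi u s0].

Definition robust_value_mu (pi : policy) (u : S -> A -> R) : R :=
  \sum_s mu M s * robust_value pi u s.

(** mixed policies Conv(Pi): categorical distributions over Pi *)
Definition mixed := {ffun policy -> R}.
Definition is_mixed (w : mixed) : Prop :=
  (forall p, 0 <= w p) /\ \sum_p w p = 1.
Definition pure (pi : policy) : mixed := [ffun p => (p == pi)%:R].

Definition mixed_value (w : mixed) (u : S -> A -> R) : R :=
  \sum_p w p * robust_value_mu p u.

Definition nonneg_vec (l : 'I_m -> R) : Prop := forall i, 0 <= l i.

Definition lagr (w : mixed) (l : 'I_m -> R) : R :=
  mixed_value w (rew M) - \sum_i l i * (mixed_value w (crew M i) - tau M i).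

Definition pi_hat (pis : nat -> policy) (T : nat) : mixed :=
  [ffun p => (\sum_(1 <= t < T.+1) (pis t == p)%:R) / T%:R].
Definition lam_hat (lams : nat -> 'I_m -> R) (T : nat) : 'I_m -> R :=
  fun i => (\sum_(1 <= t < T.+1) lams t i) / T%:R.

Definition L_max (l : 'I_m -> R) : \bar R :=
  ereal_sup [set (lagr w l)%:E | w in is_mixed].
Definition L_min (w : mixed) : \bar R :=
  ereal_inf [set (lagr w l)%:E | l in nonneg_vec].

Definition duality_gap (pis : nat -> policy) (lams : nat -> 'I_m -> R)
  (T : nat) : \bar R :=
  (L_max (lam_hat lams T) - L_min (pi_hat pis T))%E.

End RCMDP.
Arguments pure {R S A} pi.
Arguments pi_hat {R S A} pis T.
Arguments lam_hat {R m} lams T.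

(** The Lagrangian is affine in the mixture weights and in the multipliers, so
    against the averaged iterates it is the average of the per-round
    Lagrangians. Best responses bound [L_max] at the averaged multiplier above
    by the average payoff of the play, and the no-regret guarantee bounds
    [L_min] at the averaged policy below by the same average minus [R(T)/T].
    Hence the duality gap is at most [R(T)/T], which tends to [0], so it drops
    below any threshold [omega > 0] after finitely many rounds. *)
From HB Require Import structures.
From mathcomp Require Import all_boot all_order all_algebra.
From mathcomp Require Import all_classical all_reals all_analysis.
From mathcomp Require Import ring lra.
Import Order.TTheory GRing.Theory Num.Theory numFieldNormedType.Exports.
Local Open Scope ring_scope.
Local Open Scope classical_set_scope.

Section LagrangianAffine.
Variables (R : realType) (S A : finType) (m : nat) (M : rcmdp R S A m).

Lemma mixed_value_pure (p : policy S A) u :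
  mixed_value M (pure p) u = robust_value_mu M p u.
Proof.
rewrite /mixed_value (bigD1 p) //= ffunE eqxx mul1r big1 ?addr0 // => q /negbTE.
by rewrite ffunE => ->; rewrite mul0r.
Qed.

Lemma lagr_mixed (w : mixed R S A) (l : 'I_m -> R) : \sum_p w p = 1 ->
  lagr M w l = \sum_p w p * lagr M (pure p) l.
Proof.
move=> w1; under [RHS]eq_bigr do rewrite /lagr !mixed_value_pure mulrBr.
under [in RHS]eq_bigr do under eq_bigr do rewrite mixed_value_pure.
rewrite sumrB /lagr /mixed_value; congr (_ - _).
under [RHS]eq_bigr do rewrite mulr_sumr.
rewrite exchange_big /=; apply: eq_bigr => i _.
rewrite -[in LHS](mul1r (tau M i)) -[in LHS]w1 mulr_suml -sumrB mulr_sumr.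
by apply: eq_bigr => p _; ring.
Qed.

Lemma lagr_lam_hat (w : mixed R S A) (lams : nat -> 'I_m -> R) T : (0 < T)%N ->
  lagr M w (lam_hat lams T) = (\sum_(1 <= t < T.+1) lagr M w (lams t)) / T%:R.
Proof.
move=> T_gt0; rewrite /lagr sumrB mulrBl; congr (_ - _).
  rewrite sumr_const_nat subn1 /= -(mulr_natr (mixed_value M w (rew M))) mulfK //.
  by rewrite pnatr_eq0 -lt0n.
rewrite mulr_suml; under [RHS]eq_bigr do rewrite mulr_suml.
rewrite [RHS]exchange_big /=; apply: eq_bigr => i _.
by rewrite /lam_hat !mulr_suml; apply: eq_bigr => t _; rewrite mulrAC.
Qed.

Lemma pi_hat_average (pis : nat -> policy S A) T (f : policy S A -> R) :
  \sum_p pi_hat pis T p * f p = (\sum_(1 <= t < T.+1) f (pis t)) / T%:R.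
Proof.
under eq_bigr do rewrite ffunE mulrAC.
rewrite -mulr_suml; congr (_ * _).
under eq_bigr do rewrite mulr_suml.
rewrite exchange_big /=; apply: eq_bigr => t _.
rewrite (bigD1 (pis t)) //= eqxx mul1r big1 ?addr0 // => p /negbTE.
by rewrite eq_sym => ->; rewrite mul0r.
Qed.

Lemma pi_hat_sum1 (pis : nat -> policy S A) T : (0 < T)%N ->
  \sum_p pi_hat pis T p = 1 :> R.
Proof.
move=> T_gt0; have := pi_hat_average pis T (fun=> 1).
under eq_bigr do rewrite mulr1.
by move=> ->; rewrite sumr_const_nat subn1 divff // pnatr_eq0 -lt0n.
Qed.

Lemma lagr_pi_hat (pis : nat -> policy S A) (l : 'I_m -> R) T : (0 < T)%N ->
  lagr M (pi_hat pis T) l =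
  (\sum_(1 <= t < T.+1) lagr M (pure (pis t)) l) / T%:R.
Proof.
by move=> T_gt0; rewrite lagr_mixed ?pi_hat_sum1 // pi_hat_average.
Qed.

End LagrangianAffine.

Section DualityGap.
Variables (R : realType) (S A : finType) (m : nat) (M : rcmdp R S A m).
Variables (pis : nat -> policy S A) (lams : nat -> 'I_m -> R).

Definition average_payoff (T : nat) : R :=
  (\sum_(1 <= t < T.+1) lagr M (pure (pis t)) (lams t)) / T%:R.

Lemma L_max_lam_hat_le {T} : (0 < T)%N ->
  (forall t, (0 < t)%N -> forall w, is_mixed w ->
     lagr M w (lams t) <= lagr M (pure (pis t)) (lams t)) ->
  (L_max M (lam_hat lams T) <= (average_payoff T)%:E)%E.
Proof.
move=> T_gt0 best; apply: ge_ereal_sup => _ [w w_mixed <-].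
rewrite lee_fin lagr_lam_hat // ler_wpM2r ?invr_ge0 ?ler0n //.
by apply: ler_sum_nat => t /andP[t_gt0 _]; apply: best.
Qed.

Lemma L_min_pi_hat_ge {T} {r : R} : (0 < T)%N ->
  (forall l, nonneg_vec l ->
     \sum_(1 <= t < T.+1) - lagr M (pure (pis t)) (lams t) >=
     \sum_(1 <= t < T.+1) - lagr M (pure (pis t)) l - r) ->
  ((average_payoff T - r / T%:R)%:E <= L_min M (pi_hat pis T))%E.
Proof.
move=> T_gt0 regret; apply: le_ereal_inf_tmp => _ [l l_ge0 <-].
rewrite lee_fin lagr_pi_hat // /average_payoff -mulrBl.
rewrite ler_wpM2r ?invr_ge0 ?ler0n //.
by have := regret l l_ge0; rewrite !sumrN; lra.
Qed.

Lemma duality_gap_le_regret T (r : R) : (0 < T)%N ->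
  (forall t, (0 < t)%N -> forall w, is_mixed w ->
     lagr M w (lams t) <= lagr M (pure (pis t)) (lams t)) ->
  (forall l, nonneg_vec l ->
     \sum_(1 <= t < T.+1) - lagr M (pure (pis t)) (lams t) >=
     \sum_(1 <= t < T.+1) - lagr M (pure (pis t)) l - r) ->
  (duality_gap M pis lams T <= (r / T%:R)%:E)%E.
Proof.
move=> T_gt0 best regret.
have gap := leeB (L_max_lam_hat_le T_gt0 best) (L_min_pi_hat_ge T_gt0 regret).
by rewrite -EFinB subKr in gap.
Qed.

End DualityGap.

Theorem proposition2 (R : realType) (S A : finType) (m : nat)
  (M : rcmdp R S A m) (Rbar : R)
  (Hgamma : 0 <= gamma M < 1)
  (Hmu : is_dist (mu M))
  (HPnom : forall s a, is_dist (Pnom M s a))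
  (Hr : forall s a, 0 <= rew M s a <= Rbar)
  (Hg : forall i s a, 0 <= crew M i s a <= tau M i)
  (omega : R) (Homega : 0 < omega)
  (alg : seq (policy S A) -> 'I_m -> R)
  (Rg : nat -> R)
  (pis : nat -> policy S A) (lams : nat -> 'I_m -> R)
  (Hlam_nonneg : forall t, (1 <= t)%N -> nonneg_vec (lams t))
  (Hbest : forall t, (1 <= t)%N ->
     forall w, is_mixed w -> lagr M w (lams t) <= lagr M (pure (pis t)) (lams t))
  (Halg : forall t, (1 <= t)%N ->
     lams t.+1 = alg [seq pis i | i <- iota 1 t])
  (Hregret : forall T, (1 <= T)%N -> forall l, nonneg_vec l ->
     \sum_(1 <= t < T.+1) - lagr M (pure (pis t)) (lams t) >=
     \sum_(1 <= t < T.+1) - lagr M (pure (pis t)) l - Rg T)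
  (Hsublin : (fun T : nat => Rg T / T%:R) @ \oo --> (0 : R)) :
  (forall T, (1 <= T)%N -> (duality_gap M pis lams T <= (Rg T / T%:R)%:E)%E) /\
  (exists T, (1 <= T)%N /\ (duality_gap M pis lams T < omega%:E)%E).
Proof.
have gap_le T : (1 <= T)%N -> (duality_gap M pis lams T <= (Rg T / T%:R)%:E)%E.
  by move=> T_gt0; apply: duality_gap_le_regret => //; apply: Hregret.
split=> //.
have [N _ small] := cvgr_lt _ Hsublin _ Homega.
exists N.+1; split=> //.
by apply: le_lt_trans (gap_le _ _) _; rewrite // lte_fin small //= leqnSn.
Qed.
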